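(* Let $\mathcal{S}_2=\{\nu_{Q_AQ_B},\{\{P^x_a\}_a\}_x,\{\{Q^y_b\}_b\}_y\}$ be a quantum strategy for the two-player game $\mathcal{G}_2$ whose winning probability is at least $\omega_{\mathrm{exp}}$, and let $\mathcal{S}_3=\{\nu_{Q_AQ_BE},\{\{F^{xy}_c\}_{c\in\{0,1\}}\}_{x,y},\{\{P^x_a\}_a\}_x,\{\{Q^y_b\}_b\}_y\}$ be any extension of it (i.e. $\mathrm{Tr}_E\nu_{Q_AQ_BE}=\nu_{Q_AQ_B}$, Alice's and Bob's measurements unchanged, Eve measures POVM $\{F^{xy}_c\}_c$ on $E$ after learning $x,y$). Let $G_E$ be the event that Eve's output $c$ equals Alice's bit $S_A=SK_A(a,x,y)$. Then $$\Pr[G_E]_{\mathcal{S}_3}\le 1-\omega_{\mathrm{exp}}+\omega_3,$$ and consequently, for any $\beta\in[\omega_3,\omega_2]$ with $1-\beta+\omega_3>0$, $$-\log_2\Pr[G_E]_{\mathcal{S}_3}\ \ge\ \frac{\omega_{\mathrm{exp}}-\beta}{\ln 2\,(1-\beta+\omega_3)}-\log_2(1-\beta+\omega_3).$$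
   Context: A two-player non-local game $\mathcal{G}_2$ has finite question sets $\mathcal{X},\mathcal{Y}$, answer sets $\mathcal{A},\mathcal{B}$, a product question distribution $\pi$, and predicate $V(x,y,a,b)=[SK_A(a,x,y)=SK_B(b,x,y)]$ for deterministic bit-valued functions $SK_A,SK_B$. Its three-player extension $\mathcal{G}_3$: a third player receives both $(x,y)$ and outputs $c\in\{0,1\}$; the players win iff $SK_A(a,x,y)=SK_B(b,x,y)=c$. $\omega_2,\omega_3$ denote the quantum values of $\mathcal{G}_2,\mathcal{G}_3$ (supremum of winning probability over quantum strategies with arbitrary finite-dimensional shared states and local POVMs). $\omega_{\mathrm{exp}}\in[\omega_3,\omega_2]$. *)

From mathcomp Require Import all_boot all_order all_algebra.
From mathcomp Require Import classical_sets reals exp.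
From mathcomp.real_closed Require Import complex mxtens.

Set Implicit Arguments.
Unset Strict Implicit.
Unset Printing Implicit Defensive.

Import Order.TTheory GRing.Theory Num.Theory.
Local Open Scope ring_scope.

Section Quantum.
Variable R : realType.
Local Notation C := (R[i]).

Definition adjmx m n (M : 'M[C]_(m, n)) : 'M[C]_(n, m) := (map_mx Num.conj M)^T.

Definition psdmx n (M : 'M[C]_n) : Prop :=
  adjmx M = M /\ forall v : 'cV[C]_n, 0 <= (adjmx v *m M *m v) 0 0.

Definition density n (rho : 'M[C]_n) : Prop := psdmx rho /\ \tr rho = 1.

Definition povm (O : finType) n (E : O -> 'M[C]_n) : Prop :=
  (forall o, psdmx (E o)) /\ \sum_(o : O) E o = 1%:M.

Definition ptrace2 m n (M : 'M[C]_(m * n)) : 'M[C]_m :=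
  \matrix_(i, j) \sum_(k < n) M (mxtens_index (i, k)) (mxtens_index (j, k)).

Definition probmx n (rho M : 'M[C]_n) : R := complex.Re (\tr (rho *m M)).

Variables (X Y A B : finType).

Definition is_distr (T : finType) (mu : T -> R) : Prop :=
  (forall t, 0 <= mu t) /\ \sum_(t : T) mu t = 1.

Definition strategy2 dA dB (rho : 'M[C]_(dA * dB))
  (P : X -> A -> 'M[C]_dA) (Q : Y -> B -> 'M[C]_dB) : Prop :=
  density rho /\ (forall x, povm (P x)) /\ (forall y, povm (Q y)).

Definition win2 (muX : X -> R) (muY : Y -> R)
  (SKA : A -> X -> Y -> bool) (SKB : B -> X -> Y -> bool)
  dA dB (rho : 'M[C]_(dA * dB))
  (P : X -> A -> 'M[C]_dA) (Q : Y -> B -> 'M[C]_dB) : R :=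
  \sum_(x : X) \sum_(y : Y) muX x * muY y *
    \sum_(a : A) \sum_(b : B)
      (SKA a x y == SKB b x y)%:R * probmx rho (P x a *t Q y b).

Definition strategy3 dA dB dE (rho : 'M[C]_(dA * dB * dE))
  (F : X -> Y -> bool -> 'M[C]_dE)
  (P : X -> A -> 'M[C]_dA) (Q : Y -> B -> 'M[C]_dB) : Prop :=
  density rho /\ (forall x y, povm (F x y)) /\
  (forall x, povm (P x)) /\ (forall y, povm (Q y)).

Definition win3 (muX : X -> R) (muY : Y -> R)
  (SKA : A -> X -> Y -> bool) (SKB : B -> X -> Y -> bool)
  dA dB dE (rho : 'M[C]_(dA * dB * dE))
  (F : X -> Y -> bool -> 'M[C]_dE)
  (P : X -> A -> 'M[C]_dA) (Q : Y -> B -> 'M[C]_dB) : R :=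
  \sum_(x : X) \sum_(y : Y) muX x * muY y *
    \sum_(a : A) \sum_(b : B) \sum_(c : bool)
      ((SKA a x y == c) && (SKB b x y == c))%:R *
        probmx rho ((P x a *t Q y b) *t F x y c).

Definition probGE (muX : X -> R) (muY : Y -> R)
  (SKA : A -> X -> Y -> bool)
  dA dB dE (rho : 'M[C]_(dA * dB * dE))
  (F : X -> Y -> bool -> 'M[C]_dE)
  (P : X -> A -> 'M[C]_dA) (Q : Y -> B -> 'M[C]_dB) : R :=
  \sum_(x : X) \sum_(y : Y) muX x * muY y *
    \sum_(a : A) \sum_(b : B) \sum_(c : bool)
      (SKA a x y == c)%:R * probmx rho ((P x a *t Q y b) *t F x y c).

Definition omega2 muX muY SKA SKB : R :=
  sup [set p | exists (dA dB : nat) (rho : 'M[C]_(dA * dB))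
          (P : X -> A -> 'M[C]_dA) (Q : Y -> B -> 'M[C]_dB),
          strategy2 rho P Q /\ p = win2 muX muY SKA SKB rho P Q].

Definition omega3 muX muY SKA SKB : R :=
  sup [set p | exists (dA dB dE : nat) (rho : 'M[C]_(dA * dB * dE))
          (F : X -> Y -> bool -> 'M[C]_dE)
          (P : X -> A -> 'M[C]_dA) (Q : Y -> B -> 'M[C]_dB),
          strategy3 rho F P Q /\ p = win3 muX muY SKA SKB rho F P Q].

End Quantum.

Definition log2 (R : realType) (x : R) : R := ln x / ln 2.

From mathcomp Require Import all_boot all_order all_algebra.
From mathcomp Require Import classical_sets reals exp.
From mathcomp.real_closed Require Import complex mxtens.
From mathcomp Require Import ring lra.

Set Implicit Arguments.
Unset Strict Implicit.
Unset Printing Implicit Defensive.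

Import Order.TTheory GRing.Theory Num.Theory.
Local Open Scope ring_scope.

(* For fixed questions, the bits S_A, S_B of Alice and Bob and the guess c
   of Eve satisfy [S_A = c] + [S_A = S_B] <= 1 + [S_A = S_B = c].  Averaging
   over the outcome distribution of the extended strategy, which is
   nonnegative because a state has nonnegative trace against a tensor product
   of positive semidefinite operators, and whose marginal on Alice and Bob is
   the two-player strategy (partial trace), gives
   Pr[G_E] + win_2 <= 1 + win_3 <= 1 + omega_3.  The logarithmic bound then
   follows from Pr[G_E] <= 1 - omega_exp + omega_3 and the tangent-line bound
   for the concave log2 at 1 - beta + omega_3. *)

Section TensorProduct.
Variable R : pzRingType.

Lemma tensmx_suml (I : Type) (r : seq I) (P : pred I) m n p q
    (f : I -> 'M[R]_(m, n)) (N : 'M[R]_(p, q)) :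
  (\sum_(i <- r | P i) f i) *t N = \sum_(i <- r | P i) (f i *t N).
Proof.
apply/matrixP=> a b; case: (mxtens_indexP a) => a1 a2.
case: (mxtens_indexP b) => b1 b2.
by rewrite tensmxE !summxE mulr_suml; apply: eq_bigr => i _; rewrite tensmxE.
Qed.

Lemma tensmx_sumr (I : Type) (r : seq I) (P : pred I) m n p q
    (M : 'M[R]_(m, n)) (f : I -> 'M[R]_(p, q)) :
  M *t (\sum_(i <- r | P i) f i) = \sum_(i <- r | P i) (M *t f i).
Proof.
apply/matrixP=> a b; case: (mxtens_indexP a) => a1 a2.
case: (mxtens_indexP b) => b1 b2.
by rewrite tensmxE !summxE mulr_sumr; apply: eq_bigr => i _; rewrite tensmxE.
Qed.

Lemma tensmxZl m n p q (c : R) (M : 'M[R]_(m, n)) (N : 'M[R]_(p, q)) :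
  (c *: M) *t N = c *: (M *t N).
Proof. by apply/matrixP=> a b; rewrite !mxE mulrA. Qed.

Lemma tensmx11 m n : (1%:M : 'M[R]_m) *t (1%:M : 'M[R]_n) = 1%:M.
Proof.
apply/matrixP=> a b; case: (mxtens_indexP a) => a1 a2.
case: (mxtens_indexP b) => b1 b2.
rewrite tensmxE !mxE -natrM mulnb (inj_eq (can_inj (@mxtens_indexK m n))).
by rewrite xpair_eqE.
Qed.

Lemma sum_mxtens_index (V : nmodType) m n (F : 'I_(m * n) -> V) :
  \sum_k F k = \sum_i \sum_j F (mxtens_index (i, j)).
Proof.
rewrite pair_big /=.
rewrite (reindex (@mxtens_index m n)) /=; last first.
  exists (@mxtens_unindex m n) => k _;
  by rewrite ?mxtens_indexK ?mxtens_unindexK.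
by apply: eq_bigr => -[].
Qed.

End TensorProduct.

Lemma tensmxZr (R : comPzRingType) m n p q (c : R)
    (M : 'M[R]_(m, n)) (N : 'M[R]_(p, q)) :
  M *t (c *: N) = c *: (M *t N).
Proof. by apply/matrixP=> a b; rewrite !mxE mulrCA. Qed.

Section Positivity.
Variable R : realType.
Local Notation C := R[i].

Lemma adjmx_tens m n p q (M : 'M[C]_(m, n)) (N : 'M[C]_(p, q)) :
  adjmx (M *t N) = adjmx M *t adjmx N.
Proof. by rewrite /adjmx map_mxT trmx_tens. Qed.

Definition nonneg_rank1_sum n (M : 'M[C]_n) : Prop :=
  exists (I : finType) (d : I -> C) (w : I -> 'cV[C]_n),
    (forall i, 0 <= d i) /\ M = \sum_i d i *: (w i *m adjmx (w i)).

Lemma psdmx_rank1_sum n (M : 'M[C]_n) : psdmx M -> nonneg_rank1_sum M.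
Proof.
move=> [adjM psdM].
have hermM : M \is hermsymmx.
  by apply/is_hermitianmxP; rewrite expr0 scale1r -{1}adjM /adjmx map_trmx.
have /orthomx_spectralP defM := hermitian_normalmx hermM.
set U := spectralmx M in defM; set s := spectral_diag M in defM.
have unitU : U \is unitarymx by exact: spectral_unitarymx.
rewrite invmx_unitary // in defM.
pose w i := col i (map_mx Num.conj U^T).
have adj_w i : adjmx (w i) = row i U.
  by apply/matrixP=> a b; rewrite !mxE conjCK.
exists 'I_n, (fun i => s 0 i), w; split.
  move=> i; have := psdM (w i).
  suff -> : (adjmx (w i) *m M *m w i) 0 0 = s 0 i by [].
  have Uw : U *m w i = col i 1%:M.
    apply/matrixP=> a b; rewrite -(unitarymxP unitU) !mxE.
    by apply: eq_bigr => k _; rewrite !mxE.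
  rewrite adj_w {1}defM -row_mul !mulmxA -row_mul (unitarymxP unitU).
  rewrite -mulmxA Uw mul1mx !mxE (bigD1 i) //= big1 ?addr0.
    by rewrite !mxE eqxx mulr1.
  by move=> j /negbTE ji; rewrite !mxE ji mulr0.
rewrite {1}defM; apply/matrixP=> a b.
rewrite mxE summxE; apply: eq_bigr => i _.
rewrite !mxE big_ord1 !mxE conjCK (bigD1 i) //= big1 ?addr0.
  by rewrite !mxE eqxx mulr1n mulrCA mulrA.
by move=> j /negbTE ji; rewrite !mxE ji mulr0n mulr0.
Qed.

Lemma nonneg_rank1_sum_tens m n (M : 'M[C]_m) (N : 'M[C]_n) :
  nonneg_rank1_sum M -> nonneg_rank1_sum N -> nonneg_rank1_sum (M *t N).
Proof.
move=> [I [d [v [d_ge0 ->]]]] [J [e [w [e_ge0 ->]]]].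
exists (I * J)%type, (fun ij => d ij.1 * e ij.2),
  (fun ij => v ij.1 *t w ij.2 : 'cV[C]_(m * n)); split.
  by move=> [i j]; rewrite mulr_ge0.
rewrite -(pair_big xpredT xpredT (fun i j =>
  (d i * e j) *: ((v i *t w j : 'cV[C]_(m * n)) *m adjmx (v i *t w j)))) /=.
rewrite tensmx_suml; apply: eq_bigr => i _.
rewrite tensmx_sumr; apply: eq_bigr => j _.
by rewrite tensmxZl tensmxZr scalerA adjmx_tens -tensmx_mul.
Qed.

Lemma ReD (x y : C) : complex.Re (x + y) = complex.Re x + complex.Re y.
Proof. by case: x; case: y. Qed.

Lemma Re_ge0 (x : C) : 0 <= x -> 0 <= complex.Re x.
Proof. by rewrite lecE => /andP[]. Qed.

Lemma probmx_sum n (rho : 'M[C]_n) (I : Type) (r : seq I) (P : pred I)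
    (f : I -> 'M[C]_n) :
  probmx rho (\sum_(i <- r | P i) f i) = \sum_(i <- r | P i) probmx rho (f i).
Proof.
apply: (big_morph _ (fun M N => _) _); last by rewrite /probmx mulmx0 mxtrace0.
by move=> M N; rewrite /probmx mulmxDr mxtraceD ReD.
Qed.

Lemma probmx_ge0 n (rho M : 'M[C]_n) :
  psdmx rho -> nonneg_rank1_sum M -> 0 <= probmx rho M.
Proof.
move=> [_ psd_rho] [I [d [w [d_ge0 ->]]]].
rewrite probmx_sum; apply: sumr_ge0 => i _; apply: Re_ge0.
rewrite -scalemxAr linearZ /= mulr_ge0 //.
by rewrite mulmxA mxtrace_mulC /mxtrace big_ord1 mulmxA.
Qed.

Lemma probmx_tensmx1 m n (rho : 'M[C]_(m * n)) (M : 'M[C]_m) :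
  probmx rho (M *t 1%:M) = probmx (ptrace2 rho) M.
Proof.
rewrite /probmx /mxtrace sum_mxtens_index; congr complex.Re.
apply: eq_bigr => i _; rewrite mxE.
under [RHS]eq_bigr => k _ do rewrite mxE mulr_suml.
rewrite exchange_big; apply: eq_bigr => j _.
rewrite mxE sum_mxtens_index; apply: eq_bigr => k _.
rewrite (bigD1 j) //= big1 => [|l /negbTE lj]; last first.
  by rewrite tensmxE mxE lj mulr0n !mulr0.
by rewrite addr0 tensmxE mxE eqxx mulr1.
Qed.

End Positivity.

Lemma eq_bool_bonferroni (R : numDomainType) (a b c : bool) :
  (a == c)%:R + (a == b)%:R <= 1 + ((a == c) && (b == c))%:R :> R.
Proof.
by case: a; case: b; case: c; rewrite /= ?addr0 ?add0r ?lerDl ?ler01.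
Qed.

Section ExtendedStrategy.
Variables (R : realType) (X Y A B : finType).
Variables (muX : X -> R) (muY : Y -> R).
Variables (SKA : A -> X -> Y -> bool) (SKB : B -> X -> Y -> bool).
Hypotheses (hmuX : is_distr muX) (hmuY : is_distr muY).

Lemma question_weight_ge0 x y : 0 <= muX x * muY y.
Proof. by rewrite mulr_ge0 //; [case: hmuX | case: hmuY]. Qed.

Lemma question_weight_sum1 : \sum_x \sum_y muX x * muY y = 1.
Proof.
case: hmuX hmuY => _ sumX [_ sumY].
by under eq_bigr => x _ do rewrite -mulr_sumr sumY mulr1.
Qed.

Variables (dA dB dE : nat) (rho : 'M[R[i]]_(dA * dB * dE)).
Variables (F : X -> Y -> bool -> 'M[R[i]]_dE).
Variables (P : X -> A -> 'M[R[i]]_dA) (Q : Y -> B -> 'M[R[i]]_dB).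
Hypothesis hS : strategy3 rho F P Q.

Definition outcome_prob x y a b c := probmx rho ((P x a *t Q y b) *t F x y c).

Lemma outcome_prob_ge0 x y a b c : 0 <= outcome_prob x y a b c.
Proof.
case: hS => [[psd_rho _] [hF [hP hQ]]].
apply: probmx_ge0 => //.
apply: nonneg_rank1_sum_tens; first apply: nonneg_rank1_sum_tens.
- exact: psdmx_rank1_sum ((hP x).1 a).
- exact: psdmx_rank1_sum ((hQ y).1 b).
- exact: psdmx_rank1_sum ((hF x y).1 c).
Qed.

Lemma outcome_prob_marginal x y a b :
  \sum_c outcome_prob x y a b c = probmx (ptrace2 rho) (P x a *t Q y b).
Proof.
case: hS => [_ [hF _]].
by rewrite -probmx_sum -tensmx_sumr (hF x y).2 probmx_tensmx1.
Qed.

Lemma outcome_prob_sum1 x y : \sum_a \sum_b \sum_c outcome_prob x y a b c = 1.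
Proof.
case: hS => [[_ tr_rho] [hF [hP hQ]]].
under eq_bigr => a _ do under eq_bigr => b _ do
  rewrite -probmx_sum -tensmx_sumr (hF x y).2.
under eq_bigr => a _ do rewrite -probmx_sum -tensmx_suml -tensmx_sumr (hQ y).2.
by rewrite -probmx_sum -!tensmx_suml (hP x).2 !tensmx11 /probmx mulmx1 tr_rho.
Qed.

Lemma win3_le1 : win3 muX muY SKA SKB rho F P Q <= 1.
Proof.
rewrite /win3 -[leRHS]question_weight_sum1; apply: ler_sum => x _.
apply: ler_sum => y _.
rewrite -[leRHS]mulr1 -[X in _ <= _ * X](outcome_prob_sum1 x y).
apply: ler_wpM2l; first exact: question_weight_ge0.
apply: ler_sum => a _; apply: ler_sum => b _; apply: ler_sum => c _.
have := outcome_prob_ge0 x y a b c; rewrite /outcome_prob.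
by case: (_ && _); rewrite ?mul1r ?mul0r.
Qed.

Lemma probGE_ge0 : 0 <= probGE muX muY SKA rho F P Q.
Proof.
apply: sumr_ge0 => x _; apply: sumr_ge0 => y _.
rewrite mulr_ge0 ?question_weight_ge0 //.
apply: sumr_ge0 => a _; apply: sumr_ge0 => b _; apply: sumr_ge0 => c _.
by rewrite mulr_ge0 ?outcome_prob_ge0.
Qed.

Lemma probGE_add_win2_le :
  probGE muX muY SKA rho F P Q + win2 muX muY SKA SKB (ptrace2 rho) P Q <=
  1 + win3 muX muY SKA SKB rho F P Q.
Proof.
rewrite -[in leRHS]question_weight_sum1 -!big_split /=; apply: ler_sum => x _.
rewrite -!big_split /=; apply: ler_sum => y _.
rewrite -[X in _ <= X + _]mulr1 -!mulrDr; apply: ler_wpM2l.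
  exact: question_weight_ge0.
rewrite -[X in _ <= X + _](outcome_prob_sum1 x y) -!big_split /=.
apply: ler_sum => a _; rewrite -!big_split /=; apply: ler_sum => b _.
rewrite -outcome_prob_marginal mulr_sumr -!big_split /=; apply: ler_sum => c _.
rewrite -mulrDl -[X in _ <= X + _]mul1r -mulrDl.
by apply: ler_wpM2r; [exact: outcome_prob_ge0 | exact: eq_bool_bonferroni].
Qed.

End ExtendedStrategy.

Lemma win3_le_omega3 (R : realType) (X Y A B : finType)
    (muX : X -> R) (muY : Y -> R)
    (SKA : A -> X -> Y -> bool) (SKB : B -> X -> Y -> bool)
    dA dB dE (rho : 'M[R[i]]_(dA * dB * dE)) F P Q :
  is_distr muX -> is_distr muY -> strategy3 rho F P Q ->
  win3 muX muY SKA SKB rho F P Q <= omega3 muX muY SKA SKB.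
Proof.
move=> hmuX hmuY hS; apply: ub_le_sup; last by exists dA, dB, dE, rho, F, P, Q.
by exists 1 => _ [? [? [? [? [? [? [? [hS' ->]]]]]]]]; apply: win3_le1.
Qed.

Lemma ler_log2 (R : realType) (x y : R) : 0 < x -> x <= y -> log2 x <= log2 y.
Proof.
move=> x_gt0 le_xy; have y_gt0 := lt_le_trans x_gt0 le_xy.
rewrite /log2 ler_pM2r ?invr_gt0 ?ln_gt0 ?ltr1n //.
by rewrite ler_ln // posrE.
Qed.

Lemma log2_le_tangent (R : realType) (s t : R) : 0 < s -> 0 < t ->
  log2 s <= log2 t - (t - s) / (ln 2 * t).
Proof.
move=> s_gt0 t_gt0; have ln2_gt0 : 0 < ln (2 : R) by rewrite ln_gt0 ?ltr1n.
have : ln (s / t) <= s / t - 1.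
  by rewrite -[X in ln X](subrK 1) addrC le_ln1Dx // ltrBrDl subrr divr_gt0.
rewrite ln_div ?posrE // /log2 => le_ln.
have -> : log2 t - (t - s) / (ln 2 * t) = (ln t + (s / t - 1)) / ln 2.
  by rewrite /log2; field; rewrite !gt_eqF.
by rewrite ler_pM2r ?invr_gt0 // -lerBlDl.
Qed.

Theorem mainTheorem6 (R : realType) (X Y A B : finType)
  (muX : X -> R) (muY : Y -> R)
  (SKA : A -> X -> Y -> bool) (SKB : B -> X -> Y -> bool)
  (hmuX : is_distr muX) (hmuY : is_distr muY)
  (wexp : R)
  (hwexp : omega3 muX muY SKA SKB <= wexp <= omega2 muX muY SKA SKB)
  (dA dB dE : nat)
  (rho2 : 'M[R[i]]_(dA * dB))
  (P : X -> A -> 'M[R[i]]_dA) (Q : Y -> B -> 'M[R[i]]_dB)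
  (hS2 : strategy2 rho2 P Q)
  (hwin : wexp <= win2 muX muY SKA SKB rho2 P Q)
  (rho3 : 'M[R[i]]_(dA * dB * dE))
  (F : X -> Y -> bool -> 'M[R[i]]_dE)
  (hS3 : strategy3 rho3 F P Q)
  (hext : ptrace2 rho3 = rho2) :
  let pGE := probGE muX muY SKA rho3 F P Q in
  let w3 := omega3 muX muY SKA SKB in
  pGE <= 1 - wexp + w3 /\
  (forall beta : R, w3 <= beta <= omega2 muX muY SKA SKB ->
     0 < 1 - beta + w3 ->
     (* -log2 0 = +oo, so the inequality holds trivially when pGE = 0 *)
     pGE = 0 \/
     (wexp - beta) / (ln 2 * (1 - beta + w3)) - log2 (1 - beta + w3)
       <= - log2 pGE).
Proof.
move=> pGE w3.
have monogamy := probGE_add_win2_le SKA SKB hmuX hmuY hS3.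
have win3_le := win3_le_omega3 SKA SKB hmuX hmuY hS3.
rewrite hext in monogamy.
have pGE_le : pGE <= 1 - wexp + w3 by rewrite /pGE /w3; lra.
split=> // beta _ t_gt0.
have [|pGE_neq0] := eqVneq pGE 0; [by left | right].
have pGE_gt0 : 0 < pGE by rewrite lt_def pGE_neq0 probGE_ge0.
have := ler_log2 pGE_gt0 pGE_le.
have := log2_le_tangent (lt_le_trans pGE_gt0 pGE_le) t_gt0.
have -> : (1 - beta + w3) - (1 - wexp + w3) = wexp - beta by ring.
lra.
Qed.
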